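(* Consider $M$ base stations $\mathcal{M}=\{1,\dots,M\}$ and $N$ test points $\mathcal{N}=\{1,\dots,N\}$, with data demands $d_j>0$ ($j\in\mathcal{N}$), an assignment matrix $X=(x_{i,j})\in\{0,1\}^{M\times N}$ such that every base station $i$ has at least one $j$ with $x_{i,j}=1$, power gains $g_{i,j}\ge 0$ with $g_{i,j}>0$ whenever $x_{i,j}=1$, transmit power spectral densities $P_i>0$, noise power $\sigma^2>0$, and constants $K>0$, $B>0$, $\eta>0$. For $\boldsymbol{\rho}=(\rho_1,\dots,\rho_M)\in\mathbb{R}_+^M$ define $$\omega_{i,j}(\boldsymbol{\rho})=B\log_2\!\left(1+\frac{P_i g_{i,j}}{\eta\left(\sum_{l\in\mathcal{M}\setminus\{i\}}P_l g_{l,j}\rho_l+\sigma^2\right)}\right),\qquad I_i(\boldsymbol{\rho})=\sum_{j\in\mathcal{N}:\,x_{i,j}=1}\frac{d_j}{K\,\omega_{i,j}(\boldsymbol{\rho})}.$$ Then each $I_i:\mathbb{R}_+^M\to\mathbb{R}_{++}$ is concave, and hence a standard interference function; consequently $\mathcal{J}(\boldsymbol{\rho})=[I_1(\boldsymbol{\rho}),\dots,I_M(\boldsymbol{\rho})]^T$ is a standard interference mapping.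
   Context: $\mathbb{R}_+$ denotes the nonnegative reals and $\mathbb{R}_{++}$ the strictly positive reals; vector inequalities are componentwise. A function $I:\mathbb{R}_+^M\to\mathbb{R}_{++}$ is called a standard interference function if it satisfies scalability ($\alpha I(\mathbf{x})>I(\alpha\mathbf{x})$ for all $\mathbf{x}\in\mathbb{R}_+^M$, $\alpha>1$) and monotonicity ($I(\mathbf{x}_1)\ge I(\mathbf{x}_2)$ whenever $\mathbf{x}_1\ge\mathbf{x}_2$). Given standard interference functions $I_1,\dots,I_M$, the mapping $\mathbf{x}\mapsto[I_1(\mathbf{x}),\dots,I_M(\mathbf{x})]^T$ is called a standard interference mapping. *)

(* classical reals. Vectors in R^M are functions nat -> R,
   only the indices 0..M-1 are meaningful (stations i = 0..M-1,
   test points j = 0..N-1). *)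
From Stdlib Require Import Reals Lra Lia Arith.
Open Scope R_scope.

Fixpoint sumR (n : nat) (f : nat -> R) : R :=
  match n with
  | O => 0
  | S k => sumR k f + f k
  end.

Definition log2 (y : R) : R := ln y / ln 2.

Definition nonneg (M : nat) (x : nat -> R) : Prop :=
  forall k, (k < M)%nat -> 0 <= x k.

Definition vge (M : nat) (x1 x2 : nat -> R) : Prop :=
  forall k, (k < M)%nat -> x2 k <= x1 k.

Definition vscale (a : R) (x : nat -> R) : nat -> R := fun k => a * x k.

Definition positive_on (M : nat) (I : (nat -> R) -> R) : Prop :=
  forall x, nonneg M x -> 0 < I x.

Definition concave_on_Rplus (M : nat) (I : (nat -> R) -> R) : Prop :=
  forall x y t, nonneg M x -> nonneg M y -> 0 <= t <= 1 ->
    t * I x + (1 - t) * I y <= I (fun k => t * x k + (1 - t) * y k).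

Definition standard_interference_function (M : nat) (I : (nat -> R) -> R) : Prop :=
  positive_on M I /\
  (forall x a, nonneg M x -> 1 < a -> a * I x > I (vscale a x)) /\
  (forall x1 x2, nonneg M x1 -> nonneg M x2 -> vge M x1 x2 -> I x1 >= I x2).

Definition standard_interference_mapping (M : nat) (J : nat -> (nat -> R) -> R) : Prop :=
  forall i, (i < M)%nat -> standard_interference_function M (J i).

Definition omega (M : nat) (B eta sigma2 : R) (P : nat -> R) (g : nat -> nat -> R)
  (i j : nat) (rho : nat -> R) : R :=
  B * log2 (1 + P i * g i j /
    (eta * (sumR M (fun l => if Nat.eqb l i then 0 else P l * g l j * rho l) + sigma2))).

Definition Ifun (M N : nat) (d : nat -> R) (x : nat -> nat -> bool) (K B eta sigma2 : R)
  (P : nat -> R) (g : nat -> nat -> R) (i : nat) (rho : nat -> R) : R :=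
  sumR N (fun j => if x i j then d j / (K * omega M B eta sigma2 P g i j rho) else 0).

(** Writing [c_j = d_j ln 2 / (K B)] and [S_j(rho)] for the affine, positive
    interference-plus-noise term, each summand of [I_i] is
    [c_j / ln (1 + a_j / S_j(rho))].  The map [s |-> 1 / ln (1 + a / s)] is
    concave on [(0, +oo)]: its derivative is [a / (s (s + a) ln(1 + a/s)^2)],
    and [s (s + a) ln(1 + a/s)^2] is nondecreasing by the Padé bound
    [ln (1 + u) >= 2u / (2 + u)].  Concavity survives composition with affine
    maps and nonnegative sums, so [I_i] is concave and positive on [R_+^M].
    A positive concave function on the cone [R_+^M] is automatically monotone
    (a concave function bounded below on a half-line cannot decrease along it)
    and strictly scalable (compare [rho] with the segment from [0] to
    [a rho]), hence it is a standard interference function. *)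

From Coquelicot Require Import Coquelicot.
From Stdlib Require Import Reals Lra Lia FunctionalExtensionality.
Open Scope R_scope.

Section DeriveMonotone.
Variables (lo : R) (f df : R -> R).
Hypothesis f_derive : forall s, lo < s -> is_derive f s (df s).

Lemma continuity_pt_of_derive s : lo < s -> continuity_pt f s.
Proof.
  intros Hs. apply derivable_continuous_pt. exists (df s).
  apply is_derive_Reals, f_derive, Hs.
Qed.

Lemma nondecreasing_of_derive_nonneg :
  (forall s, lo < s -> 0 <= df s) ->
  forall s1 s2, lo < s1 -> s1 <= s2 -> f s1 <= f s2.
Proof.
  intros df_ge0 s1 s2 Hs1 Hs12.
  destruct (MVT_gen f s1 s2 df) as [c [Hc Hmvt]];
    rewrite ?Rmin_left, ?Rmax_right in * by lra.
  - intros s Hs. apply f_derive. lra.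
  - intros s Hs. apply continuity_pt_of_derive. lra.
  - assert (0 <= df c * (s2 - s1)) by (apply Rmult_le_pos; [apply df_ge0 | ]; lra).
    lra.
Qed.

Lemma tangent_above_of_derive_noninc :
  (forall s1 s2, lo < s1 -> s1 <= s2 -> df s2 <= df s1) ->
  forall s s', lo < s -> lo < s' -> f s' <= f s + df s * (s' - s).
Proof.
  intros df_noninc s s' Hs Hs'.
  destruct (MVT_gen f s s' df) as [c [Hc Hmvt]].
  - intros z Hz. apply f_derive.
    destruct (Rle_dec s s'); [rewrite Rmin_left in Hz | rewrite Rmin_right in Hz]; lra.
  - intros z Hz. apply continuity_pt_of_derive.
    destruct (Rle_dec s s'); [rewrite Rmin_left in Hz | rewrite Rmin_right in Hz]; lra.
  - destruct (Rle_dec s s').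
    + rewrite Rmin_left, Rmax_right in Hc by lra.
      assert (df c <= df s) by (apply df_noninc; lra).
      assert (df c * (s' - s) <= df s * (s' - s)) by (apply Rmult_le_compat_r; lra).
      lra.
    + rewrite Rmin_right, Rmax_left in Hc by lra.
      assert (df s <= df c) by (apply df_noninc; lra).
      assert (df c * (s - s') >= df s * (s - s')) by (apply Rle_ge, Rmult_le_compat_r; lra).
      lra.
Qed.

Lemma concave_of_derive_noninc :
  (forall s1 s2, lo < s1 -> s1 <= s2 -> df s2 <= df s1) ->
  forall s1 s2 t, lo < s1 -> lo < s2 -> 0 <= t <= 1 ->
  t * f s1 + (1 - t) * f s2 <= f (t * s1 + (1 - t) * s2).
Proof.
  intros df_noninc s1 s2 t Hs1 Hs2 Ht.
  set (s := t * s1 + (1 - t) * s2).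
  assert (Hs : lo < s).
  { unfold s. destruct (Req_dec t 0) as [-> | Ht0]; [lra |].
    replace lo with (t * lo + (1 - t) * lo) by ring.
    assert (t * lo < t * s1) by (apply Rmult_lt_compat_l; lra).
    assert ((1 - t) * lo <= (1 - t) * s2) by (apply Rmult_le_compat_l; lra).
    lra. }
  assert (T1 := tangent_above_of_derive_noninc df_noninc s s1 Hs Hs1).
  assert (T2 := tangent_above_of_derive_noninc df_noninc s s2 Hs Hs2).
  apply (Rmult_le_compat_l t) in T1; [| lra].
  apply (Rmult_le_compat_l (1 - t)) in T2; [| lra].
  assert (t * (f s + df s * (s1 - s)) + (1 - t) * (f s + df s * (s2 - s)) = f s)
    by (unfold s; ring).
  lra.
Qed.

End DeriveMonotone.

Lemma ln_one_plus_ge (u : R) : 0 <= u -> 2 * u / (2 + u) <= ln (1 + u).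
Proof.
  intros Hu.
  set (k := fun v => ln (1 + v) - 2 * v / (2 + v)).
  assert (Hk : k 0 <= k u).
  { apply (nondecreasing_of_derive_nonneg (-1) k
             (fun v => v ^ 2 / ((1 + v) * (2 + v) ^ 2))); [| | lra | lra].
    - intros v Hv. unfold k. auto_derive; [lra | field; lra].
    - intros v Hv. apply Rdiv_le_0_compat; [nra |].
      apply Rmult_lt_0_compat; [lra | apply pow_lt; lra]. }
  unfold k in Hk. rewrite Rplus_0_r, ln_1 in Hk.
  replace (2 * 0 / (2 + 0)) with 0 in Hk by field. lra.
Qed.

Definition capacity (a s : R) : R := ln (1 + a / s).

Definition inv_capacity_derive (a s : R) : R := a / (s * (s + a) * capacity a s ^ 2).

Section InvCapacity.
Variable a : R.
Hypothesis a_gt0 : 0 < a.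

Lemma capacity_gt0 s : 0 < s -> 0 < capacity a s.
Proof.
  intros Hs. unfold capacity. rewrite <- ln_1.
  apply ln_increasing; [lra |].
  assert (0 < a / s) by (apply Rdiv_lt_0_compat; lra). lra.
Qed.

Lemma capacity_ge s : 0 < s -> 2 * a / (2 * s + a) <= capacity a s.
Proof.
  intros Hs.
  replace (2 * a / (2 * s + a)) with (2 * (a / s) / (2 + a / s)) by (field; lra).
  apply ln_one_plus_ge. left. apply Rdiv_lt_0_compat; lra.
Qed.

Lemma is_derive_capacity s : 0 < s -> is_derive (capacity a) s (- a / (s * (s + a))).
Proof.
  intros Hs. unfold capacity.
  assert (0 < a / s) by (apply Rdiv_lt_0_compat; lra).
  auto_derive; [repeat split; lra | field; lra].
Qed.

Lemma is_derive_inv_capacity s :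
  0 < s -> is_derive (fun s => / capacity a s) s (inv_capacity_derive a s).
Proof.
  intros Hs. assert (0 < capacity a s) by (apply capacity_gt0, Hs).
  unfold inv_capacity_derive.
  replace (a / (s * (s + a) * capacity a s ^ 2))
    with (- (- a / (s * (s + a))) / capacity a s ^ 2) by (field; repeat split; lra).
  apply is_derive_inv; [apply is_derive_capacity |]; lra.
Qed.

(* [(s (s + a) L^2)' = L ((2s + a) L - 2a)] with [L = capacity a s], and the
   Padé bound makes the second factor nonnegative. *)
Lemma inv_capacity_derive_noninc s1 s2 :
  0 < s1 -> s1 <= s2 -> inv_capacity_derive a s2 <= inv_capacity_derive a s1.
Proof.
  intros Hs1 Hs12.
  set (E := fun s => s * (s + a) * capacity a s ^ 2).
  assert (HE : E s1 <= E s2).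
  { apply (nondecreasing_of_derive_nonneg 0 E
             (fun s => capacity a s * ((2 * s + a) * capacity a s - 2 * a))); auto.
    - intros s Hs. unfold E, capacity.
      assert (0 < a / s) by (apply Rdiv_lt_0_compat; lra).
      auto_derive; [repeat split; lra |].
      unfold Rdiv. replace (/ (1 + a * / s)) with (s / (s + a)) by (field; lra).
      field. lra.
    - intros s Hs. apply Rmult_le_pos; [left; apply capacity_gt0, Hs |].
      assert (H := capacity_ge s Hs).
      apply (Rmult_le_compat_l (2 * s + a)) in H; [| lra].
      replace ((2 * s + a) * (2 * a / (2 * s + a))) with (2 * a) in H by (field; lra).
      lra. }
  assert (0 < E s1) by
    (unfold E; assert (0 < capacity a s1) by (apply capacity_gt0, Hs1);
     repeat apply Rmult_lt_0_compat; try apply pow_lt; lra).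
  unfold inv_capacity_derive. fold (E s1) (E s2).
  unfold Rdiv. apply Rmult_le_compat_l; [lra |]. apply Rinv_le_contravar; lra.
Qed.

Lemma inv_capacity_concave s1 s2 t :
  0 < s1 -> 0 < s2 -> 0 <= t <= 1 ->
  t * / capacity a s1 + (1 - t) * / capacity a s2
    <= / capacity a (t * s1 + (1 - t) * s2).
Proof.
  apply (concave_of_derive_noninc 0 (fun s => / capacity a s) (inv_capacity_derive a)).
  - exact is_derive_inv_capacity.
  - exact inv_capacity_derive_noninc.
Qed.

End InvCapacity.

Lemma sumR_ext n f h : (forall k, (k < n)%nat -> f k = h k) -> sumR n f = sumR n h.
Proof.
  induction n as [| n IH]; simpl; intros Hfh; [reflexivity |].
  rewrite IH by (intros; apply Hfh; lia). rewrite Hfh by lia. reflexivity.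
Qed.

Lemma sumR_le n f h : (forall k, (k < n)%nat -> f k <= h k) -> sumR n f <= sumR n h.
Proof.
  induction n as [| n IH]; simpl; intros Hfh; [lra |].
  apply Rplus_le_compat; [apply IH; intros; apply Hfh |apply Hfh]; lia.
Qed.

Lemma sumR_lin n t u f h :
  sumR n (fun k => t * f k + u * h k) = t * sumR n f + u * sumR n h.
Proof. induction n as [| n IH]; simpl; [| rewrite IH]; ring. Qed.

Lemma sumR_ge0 n f : (forall k, (k < n)%nat -> 0 <= f k) -> 0 <= sumR n f.
Proof.
  induction n as [| n IH]; simpl; intros Hf; [lra |].
  assert (0 <= sumR n f) by (apply IH; intros; apply Hf; lia).
  assert (0 <= f n) by (apply Hf; lia). lra.
Qed.

Lemma sumR_gt0 n f j :
  (j < n)%nat -> 0 < f j -> (forall k, (k < n)%nat -> 0 <= f k) -> 0 < sumR n f.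
Proof.
  induction n as [| n IH]; simpl; intros Hj Hfj Hf; [lia |].
  assert (0 <= f n) by (apply Hf; lia).
  destruct (Nat.eq_dec j n) as [-> | Hjn].
  - assert (0 <= sumR n f) by (apply sumR_ge0; intros; apply Hf; lia). lra.
  - assert (0 < sumR n f) by (apply IH; [lia | exact Hfj | intros; apply Hf; lia]).
    lra.
Qed.

Section ConcaveOnRplus.
Variable M : nat.

Lemma nonneg_convex_comb x y t :
  nonneg M x -> nonneg M y -> 0 <= t <= 1 -> nonneg M (fun k => t * x k + (1 - t) * y k).
Proof.
  intros Hx Hy Ht k Hk.
  assert (0 <= x k) by (apply Hx, Hk). assert (0 <= y k) by (apply Hy, Hk).
  apply Rplus_le_le_0_compat; apply Rmult_le_pos; lra.
Qed.

Lemma concave_on_Rplus_ext (I J : (nat -> R) -> R) :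
  (forall x, nonneg M x -> I x = J x) -> concave_on_Rplus M I -> concave_on_Rplus M J.
Proof.
  intros HIJ HI x y t Hx Hy Ht.
  rewrite <- !HIJ by (try apply nonneg_convex_comb; assumption).
  apply HI; assumption.
Qed.

Lemma concave_on_Rplus_sumR N (F : nat -> (nat -> R) -> R) :
  (forall j, (j < N)%nat -> concave_on_Rplus M (F j)) ->
  concave_on_Rplus M (fun x => sumR N (fun j => F j x)).
Proof.
  intros HF x y t Hx Hy Ht. rewrite <- sumR_lin.
  apply sumR_le. intros j Hj. apply HF; assumption.
Qed.

Lemma concave_on_Rplus_comp_affine (h : R -> R) (S : (nat -> R) -> R) :
  (forall s1 s2 t, 0 < s1 -> 0 < s2 -> 0 <= t <= 1 ->
     t * h s1 + (1 - t) * h s2 <= h (t * s1 + (1 - t) * s2)) ->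
  (forall x, nonneg M x -> 0 < S x) ->
  (forall x y t, S (fun k => t * x k + (1 - t) * y k) = t * S x + (1 - t) * S y) ->
  concave_on_Rplus M (fun x => h (S x)).
Proof.
  intros Hh HS_pos HS_affine x y t Hx Hy Ht.
  rewrite HS_affine. apply Hh; [apply HS_pos.. | ]; assumption.
Qed.

Lemma concave_on_Rplus_scale (c : R) (I : (nat -> R) -> R) :
  0 <= c -> concave_on_Rplus M I -> concave_on_Rplus M (fun x => c * I x).
Proof.
  intros Hc HI x y t Hx Hy Ht.
  assert (H := HI x y t Hx Hy Ht).
  apply (Rmult_le_compat_l c) in H; [lra | assumption].
Qed.

Section PositiveConcave.
Variable I : (nat -> R) -> R.
Hypotheses (I_pos : positive_on M I) (I_concave : concave_on_Rplus M I).

(* If [I x1 < I x2] with [x2 <= x1], write [x1] as a convex combination of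
   [x2] and a point [y] far out on the half-line from [x2] through [x1];
   with the weight [1 - t = I x1 / I x2], concavity and [I y > 0] give
   [I x1 > I x1]. *)
Lemma concave_positive_nondecreasing x1 x2 :
  nonneg M x1 -> nonneg M x2 -> vge M x1 x2 -> I x2 <= I x1.
Proof.
  intros Hx1 Hx2 Hx12.
  destruct (Rle_lt_dec (I x2) (I x1)) as [Hle | Hlt]; [exact Hle | exfalso].
  assert (0 < I x1) by (apply I_pos, Hx1).
  assert (0 < I x1 / I x2) by (apply Rdiv_lt_0_compat; lra).
  set (t := (I x2 - I x1) / I x2).
  assert (Ht : 0 < t) by (apply Rdiv_lt_0_compat; lra).
  assert (Ht1 : 1 - t = I x1 / I x2) by (unfold t; field; lra).
  set (y := fun k => x2 k + (x1 k - x2 k) / t).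
  assert (Hy : nonneg M y).
  { intros k Hk. unfold y.
    assert (0 <= x2 k) by (apply Hx2, Hk). assert (x2 k <= x1 k) by (apply Hx12, Hk).
    apply Rplus_le_le_0_compat; [| apply Rdiv_le_0_compat]; lra. }
  assert (Hcomb : (fun k => t * y k + (1 - t) * x2 k) = x1).
  { apply functional_extensionality. intros k. unfold y. field. lra. }
  assert (C := I_concave y x2 t Hy Hx2 (conj (Rlt_le _ _ Ht) (ltac:(lra) : t <= 1))).
  rewrite Hcomb, Ht1 in C.
  assert (0 < t * I y) by (apply Rmult_lt_0_compat; [lra | apply I_pos, Hy]).
  assert (I x1 / I x2 * I x2 = I x1) by (field; lra).
  lra.
Qed.

(* [x] lies on the segment from [0] to [a x], at parameter [1 / a]. *)
Lemma concave_positive_scalable x a :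
  nonneg M x -> 1 < a -> a * I x > I (vscale a x).
Proof.
  intros Hx Ha.
  assert (Hax : nonneg M (vscale a x)).
  { intros k Hk. unfold vscale. apply Rmult_le_pos; [lra | apply Hx, Hk]. }
  assert (H0 : nonneg M (fun _ => 0)) by (intros k _; lra).
  assert (Hinv : 0 < / a < 1) by (split; [apply Rinv_0_lt_compat | rewrite <- Rinv_1; apply Rinv_1_lt_contravar]; lra).
  assert (C := I_concave _ _ (/ a) Hax H0 (conj (Rlt_le _ _ (proj1 Hinv)) (Rlt_le _ _ (proj2 Hinv)))).
  assert (Hcomb : (fun k => / a * vscale a x k + (1 - / a) * 0) = x).
  { apply functional_extensionality. intros k. unfold vscale. field. lra. }
  cbv beta in C. rewrite Hcomb in C.
  assert (0 < (1 - / a) * I (fun _ => 0)) by (apply Rmult_lt_0_compat; [lra | apply I_pos, H0]).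
  assert (Hlt : / a * I (vscale a x) < I x) by lra.
  apply (Rmult_lt_compat_l a) in Hlt; [| lra].
  rewrite <- Rmult_assoc, Rinv_r, Rmult_1_l in Hlt by lra. lra.
Qed.

Lemma standard_interference_of_concave : standard_interference_function M I.
Proof.
  split; [exact I_pos | split].
  - intros x a Hx Ha. apply concave_positive_scalable; assumption.
  - intros x1 x2 Hx1 Hx2 Hx12. apply Rle_ge, concave_positive_nondecreasing; assumption.
Qed.

End PositiveConcave.
End ConcaveOnRplus.

Section Load.
Variables (M N : nat) (d : nat -> R) (x : nat -> nat -> bool)
  (g : nat -> nat -> R) (P : nat -> R) (sigma2 K B eta : R).
Hypotheses (Hd : forall j, (j < N)%nat -> 0 < d j)
  (Hx : forall i, (i < M)%nat -> exists j, (j < N)%nat /\ x i j = true)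
  (Hg : forall i j, (i < M)%nat -> (j < N)%nat -> 0 <= g i j)
  (Hgx : forall i j, (i < M)%nat -> (j < N)%nat -> x i j = true -> 0 < g i j)
  (HP : forall i, (i < M)%nat -> 0 < P i)
  (Hs : 0 < sigma2) (HK : 0 < K) (HB : 0 < B) (Heta : 0 < eta).

Definition interference_noise (i j : nat) (rho : nat -> R) : R :=
  eta * (sumR M (fun l => if Nat.eqb l i then 0 else P l * g l j * rho l) + sigma2).

Lemma interference_noise_gt0 i j rho :
  (j < N)%nat -> nonneg M rho -> 0 < interference_noise i j rho.
Proof.
  intros Hj Hrho. unfold interference_noise. apply Rmult_lt_0_compat; [exact Heta |].
  enough (0 <= sumR M (fun l => if Nat.eqb l i then 0 else P l * g l j * rho l)) by lra.
  apply sumR_ge0. intros l Hl. destruct (Nat.eqb l i); [lra |].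
  apply Rmult_le_pos; [apply Rmult_le_pos; [left; apply HP | apply Hg] | apply Hrho]; assumption.
Qed.

Lemma interference_noise_affine i j rho1 rho2 t :
  interference_noise i j (fun k => t * rho1 k + (1 - t) * rho2 k)
  = t * interference_noise i j rho1 + (1 - t) * interference_noise i j rho2.
Proof.
  unfold interference_noise.
  rewrite (sumR_ext M _ (fun l =>
     t * (if Nat.eqb l i then 0 else P l * g l j * rho1 l) +
     (1 - t) * (if Nat.eqb l i then 0 else P l * g l j * rho2 l))).
  - rewrite sumR_lin. ring.
  - intros l _. destruct (Nat.eqb l i); ring.
Qed.

Lemma load_term_eq i j rho :
  (i < M)%nat -> (j < N)%nat -> x i j = true -> nonneg M rho ->
  d j / (K * omega M B eta sigma2 P g i j rho)
  = d j * ln 2 / (K * B) * / capacity (P i * g i j) (interference_noise i j rho).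
Proof.
  intros Hi Hj Hxij Hrho.
  assert (0 < P i * g i j) by (apply Rmult_lt_0_compat; auto).
  assert (0 < capacity (P i * g i j) (interference_noise i j rho))
    by (apply capacity_gt0, interference_noise_gt0; assumption).
  assert (H2 := ln_lt_2).
  unfold omega, log2. fold (interference_noise i j rho).
  fold (capacity (P i * g i j) (interference_noise i j rho)).
  field. repeat split; lra.
Qed.

Lemma load_term_gt0 i j rho :
  (i < M)%nat -> (j < N)%nat -> x i j = true -> nonneg M rho ->
  0 < d j / (K * omega M B eta sigma2 P g i j rho).
Proof.
  intros Hi Hj Hxij Hrho. rewrite load_term_eq by assumption.
  assert (0 < P i * g i j) by (apply Rmult_lt_0_compat; auto).
  assert (H2 := ln_lt_2). assert (0 < d j) by auto.
  apply Rmult_lt_0_compat.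
  - apply Rdiv_lt_0_compat; apply Rmult_lt_0_compat; lra.
  - apply Rinv_0_lt_compat, capacity_gt0, interference_noise_gt0; assumption.
Qed.

Lemma load_term_concave i j : (i < M)%nat -> (j < N)%nat ->
  concave_on_Rplus M
    (fun rho => if x i j then d j / (K * omega M B eta sigma2 P g i j rho) else 0).
Proof.
  intros Hi Hj. destruct (x i j) eqn:Hxij; [| intros ? ? t _ _ _; lra].
  assert (Ha : 0 < P i * g i j) by (apply Rmult_lt_0_compat; auto).
  apply (concave_on_Rplus_ext M (fun rho =>
     d j * ln 2 / (K * B) * / capacity (P i * g i j) (interference_noise i j rho))).
  { intros rho Hrho. symmetry. apply load_term_eq; assumption. }
  apply concave_on_Rplus_scale.
  - assert (H2 := ln_lt_2). assert (0 < d j) by auto.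
    left. apply Rdiv_lt_0_compat; apply Rmult_lt_0_compat; lra.
  - apply (concave_on_Rplus_comp_affine M (fun s => / capacity (P i * g i j) s)).
    + apply inv_capacity_concave, Ha.
    + intros rho Hrho. apply interference_noise_gt0; assumption.
    + apply interference_noise_affine.
Qed.

Lemma Ifun_positive i : (i < M)%nat -> positive_on M (Ifun M N d x K B eta sigma2 P g i).
Proof.
  intros Hi rho Hrho. destruct (Hx i Hi) as [j [Hj Hxij]].
  apply (sumR_gt0 _ _ j Hj).
  - rewrite Hxij. apply load_term_gt0; assumption.
  - intros k Hk. destruct (x i k) eqn:Hxik; [| lra].
    left. apply load_term_gt0; assumption.
Qed.

Lemma Ifun_concave i : (i < M)%nat -> concave_on_Rplus M (Ifun M N d x K B eta sigma2 P g i).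
Proof.
  intros Hi. apply (concave_on_Rplus_sumR M N (fun j rho =>
    if x i j then d j / (K * omega M B eta sigma2 P g i j rho) else 0)).
  intros j Hj. apply load_term_concave; assumption.
Qed.

End Load.

Theorem mainTheorem2 (M N : nat) (d : nat -> R) (x : nat -> nat -> bool)
  (g : nat -> nat -> R) (P : nat -> R) (sigma2 K B eta : R)
  (Hd : forall j, (j < N)%nat -> 0 < d j)
  (Hx : forall i, (i < M)%nat -> exists j, (j < N)%nat /\ x i j = true)
  (Hg : forall i j, (i < M)%nat -> (j < N)%nat -> 0 <= g i j)
  (Hgx : forall i j, (i < M)%nat -> (j < N)%nat -> x i j = true -> 0 < g i j)
  (HP : forall i, (i < M)%nat -> 0 < P i)
  (Hs : 0 < sigma2) (HK : 0 < K) (HB : 0 < B) (Heta : 0 < eta) :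
  (forall i, (i < M)%nat ->
     positive_on M (Ifun M N d x K B eta sigma2 P g i) /\
     concave_on_Rplus M (Ifun M N d x K B eta sigma2 P g i) /\
     standard_interference_function M (Ifun M N d x K B eta sigma2 P g i)) /\
  standard_interference_mapping M (Ifun M N d x K B eta sigma2 P g).
Proof.
  assert (Hstd : forall i, (i < M)%nat ->
     positive_on M (Ifun M N d x K B eta sigma2 P g i) /\
     concave_on_Rplus M (Ifun M N d x K B eta sigma2 P g i) /\
     standard_interference_function M (Ifun M N d x K B eta sigma2 P g i)).
  { intros i Hi.
    assert (Hpos : positive_on M (Ifun M N d x K B eta sigma2 P g i))
      by (apply Ifun_positive; assumption).
    assert (Hconc : concave_on_Rplus M (Ifun M N d x K B eta sigma2 P g i))
      by (apply Ifun_concave; assumption).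
    split; [exact Hpos | split; [exact Hconc |]].
    apply standard_interference_of_concave; assumption. }
  split; [exact Hstd | intros i Hi; apply Hstd, Hi].
Qed.
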